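(* MPS is not sd-weakly-strategyproof on the domain of strict linear orders over bundles. Concretely, for $n=2$, $p=2$, $D_F=\{1_F,2_F\}$, $D_B=\{1_B,2_B\}$, with true preferences $1_F2_B\succ_1 1_F1_B\succ_1 2_F1_B\succ_1 2_F2_B$ and $1_F1_B\succ_2 2_F1_B\succ_2 2_F2_B\succ_2 1_F2_B$, if agent 1 reports $2_F1_B\succ'_1 1_F1_B\succ'_1 1_F2_B\succ'_1 2_F2_B$, then agent 1's MPS allocation under the misreport weakly stochastically dominates her truthful MPS allocation w.r.t. $\succ_1$ and differs from it.
   Context: Setting: agents $N=\{1,\dots,n\}$; types $D_i$ pairwise disjoint, $|D_i|=n$, unit supply; bundles $\mathcal D=\prod_i D_i$; strict linear orders $\succ_j$ on $\mathcal D$. An assignment is an $n\times|\mathcal D|$ matrix $(p_{j,x})$ with entries in $[0,1]$, rows summing to $1$, and $\sum_j\sum_{x\ni o}p_{j,x}=1$ for each item $o$. $U(\succ,x)=\{y:y\succ x\}\cup\{x\}$; $p$ weakly stochastically dominates $q$ w.r.t. $\succ$ if $\sum_{y\in U(\succ,x)}p_y\ge\sum_{y\in U(\succ,x)}q_y$ for all $x$. A mechanism $f$ is sd-weakly-strategyproof if for every profile $R$, agent $j$ and report $\succ'_j$, with $R'=(\succ'_j,\succ_{-j})$: if $f(R')_j$ weakly stochastically dominates $f(R)_j$ w.r.t. $\succ_j$ then $f(R')_j=f(R)_j$. MPS: items start with supply $1$; a bundle is available if all its items have positive remaining supply. Continuously in time each agent eats her (reported) most preferred available bundle at rate $1$ (each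 item of it consumed at rate $1$, $p_{j,x}$ growing at rate $1$); exhausted items make all bundles containing them unavailable; run until all items are exhausted. *)

From mathcomp Require Import all_boot all_order all_algebra.
Set Implicit Arguments. Unset Strict Implicit. Unset Printing Implicit Defensive.
Import Order.TTheory GRing.Theory Num.Theory.
Local Open Scope ring_scope.

Section MPS.
Variables n p : nat.

(* agents are 'I_n; types are 'I_p; each type has items 'I_n.
   An item is a pair (type, index); a bundle picks one item of each type. *)
Definition item := ('I_p * 'I_n)%type.
Definition bundle := {ffun 'I_p -> 'I_n}.
Definition contains (x : bundle) (o : item) : bool := x o.1 == o.2.

(* A preference is a list of bundles, most preferred first;
   it is a strict linear order over all bundles iff it is a permutation of them. *)
Definition pref := seq bundle.
Definition linear_order (r : pref) : bool := perm_eq r (enum {: bundle}).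
Definition prefers (r : pref) (x y : bundle) : bool := (index x r < index y r)%N.
Definition upper (r : pref) (x : bundle) : pred bundle :=
  fun y => (index y r <= index x r)%N.

Definition profile := {ffun 'I_n -> pref}.
Definition valid_profile (R : profile) : Prop := forall j, linear_order (R j).

Definition supply := {ffun item -> rat}.
Definition assignment := {ffun 'I_n -> {ffun bundle -> rat}}.

Definition available (s : supply) (x : bundle) : bool :=
  [forall t, 0 < s (t, x t)].

Definition top_available (R : profile) (s : supply) (j : 'I_n) : option bundle :=
  ohead [seq x <- R j | available s x].

(* One phase of the eating procedure: every agent eats her top available
   bundle at rate 1 until the first item is exhausted. *)
Definition mps_step (R : profile) (st : supply * assignment) : supply * assignment :=
  let: (s, a) := st in
  let c := top_available R s in
  if [forall j, c j != None] then
    let rate (o : item) : nat :=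
      #|[set j | if c j is Some x then contains x o else false]| in
    let dt : rat :=
      \big[Order.min/1]_(o : item | (0 < rate o)%N) (s o / (rate o)%:R) in
    ([ffun o => s o - (rate o)%:R * dt],
     [ffun j => [ffun x => a j x + (if c j == Some x then dt else 0)]])
  else st.

Definition mps_init : supply * assignment := ([ffun => 1], [ffun => [ffun => 0]]).

(* Each phase exhausts at least one of the n*p items, so n*p phases suffice
   to run the procedure until every item is exhausted. *)
Definition MPS (R : profile) : assignment := (iter (n * p) (mps_step R) mps_init).2.

Definition sd_weakly_dominates (r : pref) (pp q : {ffun bundle -> rat}) : Prop :=
  forall x, \sum_(y | upper r x y) q y <= \sum_(y | upper r x y) pp y.

Definition deviate (R : profile) (j : 'I_n) (r' : pref) : profile :=
  [ffun i => if i == j then r' else R i].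

Definition sd_weakly_strategyproof (f : profile -> assignment) : Prop :=
  forall (R : profile) (j : 'I_n) (r' : pref),
    valid_profile R -> linear_order r' ->
    sd_weakly_dominates (R j) (f (deviate R j r') j) (f R j) ->
    f (deviate R j r') j = f R j.

End MPS.

(* The concrete instance: n = 2 agents, p = 2 types F (= type 0) and B (= type 1);
   item "1" is index 0 and item "2" is index 1. *)
Definition i1 : 'I_2 := ord0.
Definition i2 : 'I_2 := ord_max.
Definition tF : 'I_2 := ord0.
Definition mkb (f b : 'I_2) : bundle 2 2 := [ffun t : 'I_2 => if t == tF then f else b].

Definition pref1_true : pref 2 2 := [:: mkb i1 i2; mkb i1 i1; mkb i2 i1; mkb i2 i2].
Definition pref2_true : pref 2 2 := [:: mkb i1 i1; mkb i2 i1; mkb i2 i2; mkb i1 i2].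
Definition pref1_report : pref 2 2 := [:: mkb i2 i1; mkb i1 i1; mkb i1 i2; mkb i2 i2].

(* agent 1 = ord0, agent 2 = ord_max *)
Definition R_true : profile 2 2 :=
  [ffun j : 'I_2 => if j == ord0 then pref1_true else pref2_true].

From mathcomp Require Import all_boot all_order all_algebra.
Set Implicit Arguments. Unset Strict Implicit. Unset Printing Implicit Defensive.
Import Order.TTheory GRing.Theory Num.Theory.
Local Open Scope ring_scope.

(* The theorem is a concrete counterexample, so its proof is an explicit run of
   the eating procedure on the two profiles, followed by a comparison of agent 1's
   two allocations.
   Encoding supplies by their four values and assignments by a table, each phase
   becomes an equation between encodings checked by evaluating rationals:
   truthfully the phases end at times 1/2, 3/4 and 1, under the misreport at
   times 1/2 and 1.  Agent 1 then gets 2_F1_B with probability 1/2 instead of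
   1/4 and loses only 2_F2_B, her worst bundle, which gives the dominance. *)

Section Generic.
Variables n p : nat.

Lemma mps_step_idle (R : profile n p) (s : supply n p) (a : assignment n p)
    (j : 'I_n) :
  top_available R s j = None -> mps_step R (s, a) = (s, a).
Proof.
move=> no_top; rewrite /mps_step; case: forallP => // all_top.
by have := all_top j; rewrite no_top.
Qed.

Lemma linear_orderP (r : pref n p) :
  uniq r -> (forall x, x \in r) -> linear_order r.
Proof.
move=> uniq_r all_r; apply: uniq_perm => //; first exact: enum_uniq.
by move=> x; rewrite mem_enum all_r.
Qed.

Lemma manipulation_not_sd_wsp (f : profile n p -> assignment n p)
    (R : profile n p) (j : 'I_n) (r' : pref n p) :
  valid_profile R -> linear_order r' ->
  sd_weakly_dominates (R j) (f (deviate R j r') j) (f R j) ->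
  f (deviate R j r') j <> f R j ->
  ~ sd_weakly_strategyproof f.
Proof. by move=> validR lin_r' dom neq sdwsp; apply/neq/sdwsp. Qed.

End Generic.

(* The instance: two agents i1, i2; type F is i1 and type B is i2.  The
   following lemmas replace enumerations of the finite types, which do not
   evaluate, by explicit lists and case analyses. *)

Lemma ord2P (j : 'I_2) : j = i1 \/ j = i2.
Proof. by case: j => [[|[|m]] //= lt_j2]; [left | right]; apply: val_inj. Qed.

Lemma forall_ord2 (P : pred 'I_2) : [forall t, P t] = P i1 && P i2.
Proof.
apply/forallP/andP => [P_all | [P1 P2] t]; first by split; apply: P_all.
by case: (ord2P t) => ->.
Qed.

Lemma card_ord2 (P : pred 'I_2) : #|[set j | P j]| = (P i1 + P i2)%N.
Proof.
rewrite -sum1_card big_mkcond !big_ord_recl big_ord0 !inE /=.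
have -> : lift ord0 (ord0 : 'I_1) = i2 by apply: val_inj.
by case: (P i1); case: (P i2).
Qed.

Lemma index_enum_item :
  index_enum (item 2 2) = [:: (i1, i1); (i1, i2); (i2, i1); (i2, i2)].
Proof.
have enum_ord2 : enum 'I_2 = [:: i1; i2].
  by apply: (inj_map val_inj); rewrite val_enum_ord.
by rewrite [index_enum _]unlock [@Finite.enum in LHS]unlock /= /prod_enum
  enum_ord2.
Qed.

Lemma mkb_eta (x : bundle 2 2) : x = mkb (x tF) (x i2).
Proof. by apply/ffunP => t; rewrite ffunE; case: (ord2P t) => ->. Qed.

Lemma eq_mkb (f b f' b' : 'I_2) :
  (mkb f b == mkb f' b') = (f == f') && (b == b').
Proof.
apply/eqP/andP => [eq_fb | [/eqP-> /eqP->] //].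
split; apply/eqP.
  by have := congr1 (fun x : bundle 2 2 => x tF) eq_fb; rewrite !ffunE.
by have := congr1 (fun x : bundle 2 2 => x i2) eq_fb; rewrite !ffunE.
Qed.

Lemma available_mkb (s : supply 2 2) (f b : 'I_2) :
  available s (mkb f b) = (0 < s (tF, f)) && (0 < s (i2, b)).
Proof. by rewrite /available forall_ord2 !ffunE. Qed.

Lemma sum_bundle (P : pred (bundle 2 2)) (F : bundle 2 2 -> rat) :
  \sum_(y | P y) F y =
  \sum_(fb <- [:: (i1, i1); (i1, i2); (i2, i1); (i2, i2)] | P (mkb fb.1 fb.2))
    F (mkb fb.1 fb.2).
Proof.
rewrite -index_enum_item (reindex (fun fb : item 2 2 => mkb fb.1 fb.2)) //=.
exists (fun x : bundle 2 2 => (x tF, x i2)) => [[f b] _ | x _] /=.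
  by rewrite !ffunE.
by rewrite -mkb_eta.
Qed.

(* One phase for two agents whose favourite available bundles are x1 and x2:
   item o is eaten at rate [eating_rate x1 x2 o], and the phase lasts until the
   first item being eaten runs out (at most one unit of time). *)
Definition eating_rate (x1 x2 : bundle 2 2) (o : item 2 2) : nat :=
  (contains x1 o + contains x2 o)%N.

Definition phase_length (s : supply 2 2) (x1 x2 : bundle 2 2) : rat :=
  \big[Order.min/1]_(o <- [:: (i1, i1); (i1, i2); (i2, i1); (i2, i2)]
                     | (0 < eating_rate x1 x2 o)%N)
    (s o / (eating_rate x1 x2 o)%:R).

Lemma mps_step_2x2 (R : profile 2 2) (s : supply 2 2) (a : assignment 2 2)
    (x1 x2 : bundle 2 2) :
  top_available R s i1 = Some x1 -> top_available R s i2 = Some x2 ->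
  mps_step R (s, a) =
  ([ffun o => s o - (eating_rate x1 x2 o)%:R * phase_length s x1 x2],
   [ffun j => [ffun x => a j x +
      (if x == (if j == i1 then x1 else x2) then phase_length s x1 x2 else 0)]]).
Proof.
move=> top1 top2.
have rateE o : #|[set j | if top_available R s j is Some x then contains x o
                          else false]| = eating_rate x1 x2 o.
  by rewrite card_ord2 top1 top2.
rewrite /mps_step forall_ord2 top1 top2 /=.
have -> : \big[Order.min/1]_(o | (0 < #|[set j | if top_available R s j is Some x
                 then contains x o else false]|)%N)
            (s o / (#|[set j | if top_available R s j is Some x
                 then contains x o else false]|)%:R) = phase_length s x1 x2.
  by rewrite index_enum_item; apply: eq_big => [o | o _]; rewrite rateE.
congr pair; first by apply/ffunP => o; rewrite !ffunE rateE.
apply/ffunP => j; apply/ffunP => x; rewrite !ffunE.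
by case: (ord2P j) => ->; rewrite ?top1 ?top2 /= eq_sym.
Qed.

Definition supply_of (sF1 sF2 sB1 sB2 : rat) : supply 2 2 :=
  [ffun o : item 2 2 => if o.1 == tF then (if o.2 == i1 then sF1 else sF2)
                        else (if o.2 == i1 then sB1 else sB2)].

(* The assignment giving agent j the bundle f_F b_B with probability
   [table j f b] (indices start at 0, so 0 stands for the item "1"). *)
Definition assignment_of (table : nat -> nat -> nat -> rat) : assignment 2 2 :=
  [ffun j : 'I_2 => [ffun x : bundle 2 2 => table j (x tF) (x i2)]].

Lemma mps_init_2x2 :
  @mps_init 2 2 = (supply_of 1 1 1 1, assignment_of (fun _ _ _ => 0)).
Proof. by congr pair; apply/ffunP => o; rewrite !ffunE; do 2 case: ifP. Qed.

(* Computes an agent's favourite available bundle in a concrete state; the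
   membership tests [available] are evaluated through [available_mkb]. *)
Ltac favourite :=
  rewrite /top_available /deviate !ffunE /= ?ffunE /= !available_mkb /supply_of
    !ffunE /=; by vm_compute.

(* Checks a concrete phase equation entrywise, after the closed form
   [mps_step_2x2] has been applied. *)
Ltac check_phase :=
  rewrite /phase_length !big_cons big_nil; congr pair;
  [ apply/ffunP; intros [t i]; case: (ord2P t) => ->; case: (ord2P i) => ->
  | apply/ffunP; intros j; apply/ffunP; intros x; rewrite (mkb_eta x);
    case: (ord2P j) => ->; case: (ord2P (x tF)) => ->;
    case: (ord2P (x i2)) => -> ];
  rewrite /eating_rate /contains /supply_of /assignment_of !ffunE /= ?eq_mkb;
  by apply/eqP; vm_compute.

Ltac run_phase x1 x2 :=
  rewrite (@mps_step_2x2 _ _ _ x1 x2); [check_phase | favourite | favourite].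

(* Truthful run.  Phase 1 (length 1/2): agent 1 eats 1_F2_B, agent 2 eats
   1_F1_B, until 1_F runs out. *)
Definition truthful_table1 (j f b : nat) : rat :=
  match j, f, b with 0, 0, 1 => 1/2 | 1, 0, 0 => 1/2 | _, _, _ => 0 end.

Lemma truthful_phase1 :
  mps_step R_true (@mps_init 2 2) =
  (supply_of 0 1 (1/2) (1/2), assignment_of truthful_table1).
Proof.
by rewrite mps_init_2x2; run_phase (mkb i1 i2) (mkb i1 i1).
Qed.

(* Phase 2 (length 1/4): both agents eat 2_F1_B, until 1_B runs out. *)
Definition truthful_table2 (j f b : nat) : rat :=
  match j, f, b with
  | 0, 0, 1 => 1/2 | 0, 1, 0 => 1/4 | 1, 0, 0 => 1/2 | 1, 1, 0 => 1/4
  | _, _, _ => 0 end.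

Lemma truthful_phase2 :
  mps_step R_true (supply_of 0 1 (1/2) (1/2), assignment_of truthful_table1) =
  (supply_of 0 (1/2) 0 (1/2), assignment_of truthful_table2).
Proof.
by run_phase (mkb i2 i1) (mkb i2 i1).
Qed.

(* Phase 3 (length 1/4): both agents eat 2_F2_B, until everything is gone. *)
Definition truthful_table3 (j f b : nat) : rat :=
  match j, f, b with
  | 0, 0, 1 => 1/2 | 0, 1, 0 => 1/4 | 0, 1, 1 => 1/4
  | 1, 0, 0 => 1/2 | 1, 1, 0 => 1/4 | 1, 1, 1 => 1/4
  | _, _, _ => 0 end.

Lemma truthful_phase3 :
  mps_step R_true (supply_of 0 (1/2) 0 (1/2), assignment_of truthful_table2) =
  (supply_of 0 0 0 0, assignment_of truthful_table3).
Proof.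
by run_phase (mkb i2 i2) (mkb i2 i2).
Qed.

Lemma exhausted_idle (R : profile 2 2) (a : assignment 2 2) :
  mps_step R (supply_of 0 0 0 0, a) = (supply_of 0 0 0 0, a).
Proof.
apply: (@mps_step_idle _ _ _ _ _ i1).
have unavailable x : available (supply_of 0 0 0 0) x = false.
  by rewrite (mkb_eta x) available_mkb !ffunE !if_same ltxx.
by rewrite /top_available (@eq_filter _ _ pred0 unavailable) filter_pred0.
Qed.

Lemma MPS_truthful : MPS R_true = assignment_of truthful_table3.
Proof.
rewrite /MPS (_ : (2 * 2 = 3.+1)%N) // !iterSr.
by rewrite truthful_phase1 truthful_phase2 truthful_phase3 exhausted_idle.
Qed.

(* Run under agent 1's misreport.  Phase 1 (length 1/2): agent 1 eats 2_F1_B,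
   agent 2 eats 1_F1_B, until 1_B runs out. *)
Definition misreport_table1 (j f b : nat) : rat :=
  match j, f, b with 0, 1, 0 => 1/2 | 1, 0, 0 => 1/2 | _, _, _ => 0 end.

Lemma misreport_phase1 :
  mps_step (deviate R_true ord0 pref1_report) (@mps_init 2 2) =
  (supply_of (1/2) (1/2) 0 1, assignment_of misreport_table1).
Proof.
by rewrite mps_init_2x2; run_phase (mkb i2 i1) (mkb i1 i1).
Qed.

(* Phase 2 (length 1/2): agent 1 eats 1_F2_B, agent 2 eats 2_F2_B, until
   everything is gone. *)
Definition misreport_table2 (j f b : nat) : rat :=
  match j, f, b with
  | 0, 1, 0 => 1/2 | 0, 0, 1 => 1/2 | 1, 0, 0 => 1/2 | 1, 1, 1 => 1/2
  | _, _, _ => 0 end.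

Lemma misreport_phase2 :
  mps_step (deviate R_true ord0 pref1_report)
    (supply_of (1/2) (1/2) 0 1, assignment_of misreport_table1) =
  (supply_of 0 0 0 0, assignment_of misreport_table2).
Proof.
by run_phase (mkb i1 i2) (mkb i2 i2).
Qed.

Lemma MPS_misreport :
  MPS (deviate R_true ord0 pref1_report) = assignment_of misreport_table2.
Proof.
rewrite /MPS (_ : (2 * 2 = 3.+1)%N) // !iterSr.
by rewrite misreport_phase1 misreport_phase2 !exhausted_idle.
Qed.

Ltac check_linear_order :=
  apply: linear_orderP; [ by rewrite /= !inE !eq_mkb
  | intros x; rewrite (mkb_eta x);
    case: (ord2P (x tF)) => ->; case: (ord2P (x i2)) => ->;
    by rewrite !inE !eq_mkb ].

Lemma valid_R_true : valid_profile R_true.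
Proof.
by move=> j; case: (ord2P j) => ->; rewrite ffunE /=; check_linear_order.
Qed.

Lemma linear_pref1_report : linear_order pref1_report.
Proof. check_linear_order. Qed.

(* Along agent 1's true order 1_F2_B, 1_F1_B, 2_F1_B, 2_F2_B the cumulative
   probabilities are 1/2, 1/2, 1, 1 after the misreport against 1/2, 1/2, 3/4, 1
   when truthful. *)
Lemma misreport_dominates :
  sd_weakly_dominates pref1_true (assignment_of misreport_table2 ord0)
    (assignment_of truthful_table3 ord0).
Proof.
move=> x; rewrite !sum_bundle (mkb_eta x) !big_cons !big_nil.
case: (ord2P (x tF)) => ->; case: (ord2P (x i2)) => ->;
  rewrite /upper /= !eq_mkb /= !ffunE /=; by vm_compute.
Qed.

(* The misreport raises agent 1's share of 2_F1_B from 1/4 to 1/2. *)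
Lemma misreport_changes_allocation :
  assignment_of misreport_table2 ord0 <> assignment_of truthful_table3 ord0.
Proof.
move/(congr1 (fun q : {ffun bundle 2 2 -> rat} => q (mkb i2 i1))).
by rewrite !ffunE /= => /eqP; vm_compute.
Qed.

Theorem mainTheorem16 :
  [/\ valid_profile R_true, linear_order pref1_report,
      sd_weakly_dominates pref1_true
        (MPS (deviate R_true ord0 pref1_report) ord0) (MPS R_true ord0),
      MPS (deviate R_true ord0 pref1_report) ord0 <> MPS R_true ord0
    & ~ sd_weakly_strategyproof (@MPS 2 2)].
Proof.
have dominates : sd_weakly_dominates pref1_true
    (MPS (deviate R_true ord0 pref1_report) ord0) (MPS R_true ord0).
  by rewrite MPS_truthful MPS_misreport; exact: misreport_dominates.
have changes : MPS (deviate R_true ord0 pref1_report) ord0 <> MPS R_true ord0.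
  by rewrite MPS_truthful MPS_misreport; exact: misreport_changes_allocation.
split=> //; [exact: valid_R_true | exact: linear_pref1_report |].
apply: (manipulation_not_sd_wsp valid_R_true linear_pref1_report _ changes).
by rewrite ffunE.
Qed.
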